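(* Let $m\ge 2$ and $n\ge1$ be integers, $0<\delta\le 10^{-6}$, $A=(n+1)^{n+1}n^{-n}$, $f(t)=(At^n(1-t))^m$ on $[0,1]$, and $B=\frac{n}{n+1}$. For $0\le k\le m$ put \[F(k,m,\delta)=\frac{1}{\|f\|_1}\int_0^1(1+\delta t)^{1+k}|f^{(k)}(t)|\,dt,\] where $\|f\|_1=\int_0^1|f(t)|dt$ and $\|f^{(m)}\|_2=\left(\int_0^1|f^{(m)}(t)|^2dt\right)^{1/2}$. Define \[\lambda_0(m,n,\delta)=\frac{2(B^n-B^{n+1})^m(mn+m+1)!}{m!\,(mn)!},\qquad \lambda_1(m,n,\delta)=(1+\delta)^2\frac{2(B^n-B^{n+1})^m(mn+m+1)!}{m!\,(mn)!},\] \[\lambda(m,n,\delta)=\sqrt{\frac{(1+\delta)^{2m+3}-1}{\delta(2m+3)}}\;\frac{(mn+m+1)!}{A^m\,m!\,(mn)!}\,\|f^{(m)}\|_2.\] Then $1\le F(0,m,\delta)\le 1+\delta$, $\lambda_0(m,n,\delta)\le F(1,m,\delta)\le\lambda_1(m,n,\delta)$, and $F(m,m,\delta)\le\lambda(m,n,\delta)$. *)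

From Stdlib Require Import Reals Factorial.
From Coquelicot Require Import Coquelicot.
Open Scope R_scope.

Definition Acoef (n : nat) : R := (INR n + 1) ^ (n + 1) / (INR n) ^ n.

Definition fpoly (m n : nat) (t : R) : R := (Acoef n * t ^ n * (1 - t)) ^ m.

Definition Bcoef (n : nat) : R := INR n / (INR n + 1).

Definition L1norm (m n : nat) : R := RInt (fun t => Rabs (fpoly m n t)) 0 1.

Definition L2norm_deriv (m n : nat) : R :=
  sqrt (RInt (fun t => (Rabs (Derive_n (fpoly m n) m t)) ^ 2) 0 1).

Definition Ffun (k m n : nat) (delta : R) : R :=
  / L1norm m n *
  RInt (fun t => (1 + delta * t) ^ (1 + k) * Rabs (Derive_n (fpoly m n) k t)) 0 1.

Definition lambda0 (m n : nat) (delta : R) : R :=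
  2 * (Bcoef n ^ n - Bcoef n ^ (n + 1)) ^ m * INR (fact (m * n + m + 1))
  / (INR (fact m) * INR (fact (m * n))).

Definition lambda1 (m n : nat) (delta : R) : R :=
  (1 + delta) ^ 2 *
  (2 * (Bcoef n ^ n - Bcoef n ^ (n + 1)) ^ m * INR (fact (m * n + m + 1))
   / (INR (fact m) * INR (fact (m * n)))).

Definition lambda (m n : nat) (delta : R) : R :=
  sqrt (((1 + delta) ^ (2 * m + 3) - 1) / (delta * INR (2 * m + 3)))
  * (INR (fact (m * n + m + 1))
     / (Acoef n ^ m * INR (fact m) * INR (fact (m * n))))
  * L2norm_deriv m n.

From Stdlib Require Import Reals Lra Lia Factorial.
From Coquelicot Require Import Coquelicot.
Open Scope R_scope.

(** The bump [f = A^m t^(mn) (1-t)^m] is nonnegative on [0,1], so [||f||_1] is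
    [A^m] times a Beta integral, [m! (mn)! / (mn+m+1)!].  It increases up to
    [t = B], where [A B^n (1-B) = 1], and then decreases, with [f 0 = f 1 = 0];
    hence [int |f'| = 2 f B = 2].  Since [1 <= (1 + delta t)^(1+k) <= (1+delta)^(1+k)]
    on [0,1], these give the bounds on [F(0)] and [F(1)], while the bound on [F(m)]
    is Cauchy-Schwarz, with [int_0^1 (1 + delta t)^(2m+2) dt] computed exactly. *)

Lemma ex_RInt_of_continuous (f : R -> R) (a b : R) :
  (forall x, continuous f x) -> ex_RInt f a b.
Proof. intros Hf; apply (ex_RInt_continuous (V := R_CompleteNormedModule)); auto. Qed.

Lemma is_RInt_of_continuous (f : R -> R) (a b : R) :
  (forall x, continuous f x) -> is_RInt f a b (RInt f a b).
Proof.
  intros Hf; apply (RInt_correct (V := R_CompleteNormedModule)), ex_RInt_of_continuous, Hf.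
Qed.

Lemma continuous_of_ex_derive (f : R -> R) (x : R) : ex_derive f x -> continuous f x.
Proof. apply (ex_derive_continuous (K := R_AbsRing) (V := R_NormedModule)). Qed.

Lemma continuous_Rmult_fun (f g : R -> R) (x : R) :
  continuous f x -> continuous g x -> continuous (fun t => f t * g t) x.
Proof. apply (continuous_mult (K := R_AbsRing)). Qed.

Lemma continuous_Rabs_fun (f : R -> R) (x : R) :
  continuous f x -> continuous (fun t => Rabs (f t)) x.
Proof. intros Hf; apply (continuous_comp f Rabs); [exact Hf | apply continuous_Rabs]. Qed.

Lemma continuous_pow_fun (f : R -> R) (k : nat) (x : R) :
  continuous f x -> continuous (fun t => f t ^ k) x.
Proof.
  intros Hf; apply (continuous_comp f (fun y => y ^ k)); [exact Hf |].
  apply continuous_of_ex_derive; auto_derive; auto.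
Qed.

Lemma continuous_pow_affine (a d : R) (k : nat) (x : R) :
  continuous (fun t => (a + d * t) ^ k) x.
Proof. apply continuous_of_ex_derive; auto_derive; auto. Qed.

Lemma ex_derive_n_sum_monomials (c : nat -> R) (p : nat -> nat) (N k : nat) (x : R) :
  ex_derive_n (fun t => sum_n (fun j => c j * t ^ p j) N) k x.
Proof.
  apply ex_derive_n_sum_n, filter_forall; intros y l j _ _.
  apply ex_derive_n_scal_l, ex_derive_n_pow.
Qed.

Lemma RInt_weighted_bounds (w h : R -> R) (a b c0 c1 : R) : a <= b ->
  (forall x, continuous w x) -> (forall x, continuous h x) ->
  (forall x, a < x < b -> 0 <= h x /\ c0 <= w x <= c1) ->
  c0 * RInt h a b <= RInt (fun t => w t * h t) a b <= c1 * RInt h a b.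
Proof.
  intros Hab Hw Hh Hwh.
  assert (Ih : ex_RInt h a b) by (apply ex_RInt_of_continuous; auto).
  assert (Iwh : ex_RInt (fun t => w t * h t) a b)
    by (apply ex_RInt_of_continuous; intros; apply continuous_Rmult_fun; auto).
  rewrite <- !(RInt_scal (V := R_CompleteNormedModule) h) by exact Ih.
  assert (Ich : forall c, ex_RInt (fun t => scal c (h t)) a b)
    by (intros; apply (ex_RInt_scal (V := R_NormedModule)), Ih).
  split; apply RInt_le; auto; intros x Hx; destruct (Hwh x Hx) as [H0 [H1 H2]];
    unfold scal; simpl; unfold mult; simpl; nra.
Qed.

Lemma RInt_Cauchy_Schwarz (g h : R -> R) (a b : R) : a <= b ->
  (forall x, continuous g x) -> (forall x, continuous h x) ->
  0 < RInt (fun t => g t ^ 2) a b ->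
  RInt (fun t => g t * h t) a b
    <= sqrt (RInt (fun t => g t ^ 2) a b) * sqrt (RInt (fun t => h t ^ 2) a b).
Proof.
  intros Hab Hg Hh HG.
  set (G := RInt (fun t => g t ^ 2) a b) in *.
  set (H := RInt (fun t => h t ^ 2) a b).
  set (I := RInt (fun t => g t * h t) a b).
  assert (IG : is_RInt (fun t => g t ^ 2) a b G)
    by (apply is_RInt_of_continuous; intros; apply continuous_pow_fun; auto).
  assert (IH : is_RInt (fun t => h t ^ 2) a b H)
    by (apply is_RInt_of_continuous; intros; apply continuous_pow_fun; auto).
  assert (II : is_RInt (fun t => g t * h t) a b I)
    by (apply is_RInt_of_continuous; intros; apply continuous_Rmult_fun; auto).
  set (s := I / G).
  (* [0 <= RInt (s g - h)^2] at the minimizing [s = I / G] is the discriminant condition. *)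
  assert (Q : is_RInt (fun t => (s * g t - h t) ^ 2) a b (s ^ 2 * G - 2 * s * I + H)).
  { eapply is_RInt_ext;
      [| exact (is_RInt_plus _ _ _ _ _ _
                  (is_RInt_minus _ _ _ _ _ _ (is_RInt_scal _ _ _ (s ^ 2) _ IG)
                                             (is_RInt_scal _ _ _ (2 * s) _ II)) IH)].
    intros x _; unfold minus, plus, opp, scal; simpl; unfold mult; simpl; ring. }
  assert (Hsq : I * I <= G * H).
  { assert (Q0 := is_RInt_ge_0 _ _ _ _ Hab Q (fun x _ => pow2_ge_0 _)).
    replace (s ^ 2 * G - 2 * s * I + H) with ((G * H - I * I) / G) in Q0
      by (unfold s; field; lra).
    apply Rmult_le_compat_r with (r := G) in Q0; [| lra].
    unfold Rdiv in Q0; rewrite Rmult_assoc, Rinv_l, Rmult_0_l in Q0 by lra; lra. }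
  rewrite <- sqrt_mult_alt by lra.
  apply Rle_trans with (Rabs I); [apply Rle_abs |].
  rewrite <- sqrt_Rsqr_abs; apply sqrt_le_1_alt; exact Hsq.
Qed.

Lemma RInt_pow_affine_01 (d : R) (k : nat) : d <> 0 ->
  RInt (fun t => (1 + d * t) ^ k) 0 1 = ((1 + d) ^ S k - 1) / (d * INR (S k)).
Proof.
  intros Hd; assert (HS : 0 < INR (S k)) by (apply lt_0_INR; lia).
  apply is_RInt_unique.
  replace (((1 + d) ^ S k - 1) / (d * INR (S k)))
    with ((1 + d * 1) ^ S k / (d * INR (S k)) - (1 + d * 0) ^ S k / (d * INR (S k)))
    by (rewrite Rmult_1_r, Rmult_0_r, Rplus_0_r, pow1; field; lra).
  apply (is_RInt_derive (fun t => (1 + d * t) ^ S k / (d * INR (S k)))).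
  - intros x _; auto_derive; [auto |].
    change (match k with O => 1 | S _ => INR k + 1 end) with (INR (S k)).
    simpl pred; field; lra.
  - intros x _; apply continuous_pow_affine.
Qed.

Lemma RInt_beta_parts (p q : nat) :
  INR (S p) * RInt (fun t => t ^ p * (1 - t) ^ S q) 0 1
  = INR (S q) * RInt (fun t => t ^ S p * (1 - t) ^ q) 0 1.
Proof.
  set (I1 := RInt (fun t => t ^ p * (1 - t) ^ S q) 0 1).
  set (I2 := RInt (fun t => t ^ S p * (1 - t) ^ q) 0 1).
  assert (cont : forall i j x, continuous (fun t => t ^ i * (1 - t) ^ j) x)
    by (intros; apply continuous_of_ex_derive; auto_derive; auto).
  assert (Hparts := is_RInt_minus _ _ _ _ _ _
    (is_RInt_scal _ _ _ (INR (S p)) _ (is_RInt_of_continuous _ 0 1 (cont p (S q))))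
    (is_RInt_scal _ _ _ (INR (S q)) _ (is_RInt_of_continuous _ 0 1 (cont (S p) q)))).
  (* Integration by parts: the integrand is the derivative of [t^(p+1) (1-t)^(q+1)],
     which vanishes at 0 and 1. *)
  assert (Hderiv : is_RInt (fun t => INR (S p) * (t ^ p * (1 - t) ^ S q)
                                   - INR (S q) * (t ^ S p * (1 - t) ^ q)) 0 1
                     (1 ^ S p * (1 - 1) ^ S q - 0 ^ S p * (1 - 0) ^ S q)).
  { apply (is_RInt_derive (V := R_CompleteNormedModule) (fun t => t ^ S p * (1 - t) ^ S q)).
    - intros x _; auto_derive; [auto |].
      change (match p with O => 1 | S _ => INR p + 1 end) with (INR (S p)).
      change (match q with O => 1 | S _ => INR q + 1 end) with (INR (S q)).
      simpl pred; rewrite <- !tech_pow_Rmult; unfold Rminus; ring.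
    - intros x _; apply continuous_of_ex_derive; auto_derive; auto. }
  assert (E := filterlim_locally_unique _ _ _ Hparts Hderiv).
  rewrite Rminus_diag, !pow_i in E by lia.
  change (INR (S p) * I1 - INR (S q) * I2 = 1 ^ S p * 0 - 0 * (1 - 0) ^ S q) in E.
  lra.
Qed.

Lemma RInt_beta (p q : nat) :
  RInt (fun t => t ^ p * (1 - t) ^ q) 0 1
  = INR (fact p) * INR (fact q) / INR (fact (p + q + 1)).
Proof.
  revert p; induction q as [| q IH]; intros p.
  - apply is_RInt_unique.
    replace (INR (fact p) * INR (fact 0) / INR (fact (p + 0 + 1)))
      with (1 ^ S p / INR (S p) - 0 ^ S p / INR (S p)).
    + apply (is_RInt_ext (fun t => t ^ p)); [intros; simpl; ring | apply is_RInt_pow].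
    + replace (p + 0 + 1)%nat with (S p) by lia.
      rewrite pow1, pow_i, fact_simpl, mult_INR by lia; simpl (INR (fact 0)).
      assert (0 < INR (fact p)) by apply INR_fact_lt_0.
      assert (0 < INR (S p)) by (apply lt_0_INR; lia).
      field; lra.
  - assert (Hparts := RInt_beta_parts p q).
    rewrite IH in Hparts.
    replace (S p + q + 1)%nat with (p + S q + 1)%nat in Hparts by lia.
    assert (0 < INR (S p)) by (apply lt_0_INR; lia).
    assert (0 < INR (fact (p + S q + 1))) by apply INR_fact_lt_0.
    apply (Rmult_eq_reg_l (INR (S p))); [| lra].
    rewrite Hparts, !fact_simpl, !mult_INR; field; lra.
Qed.

Lemma RInt_abs_derive_unimodal (F : R -> R) (a c b : R) : a <= c <= b ->
  (forall x, ex_derive F x) -> (forall x, continuous (Derive F) x) ->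
  (forall x, a <= x <= c -> 0 <= Derive F x) ->
  (forall x, c <= x <= b -> Derive F x <= 0) ->
  RInt (fun t => Rabs (Derive F t)) a b = 2 * F c - F a - F b.
Proof.
  intros Hacb HF HdF Hup Hdown.
  assert (Habs : forall u v, ex_RInt (fun t => Rabs (Derive F t)) u v)
    by (intros; apply ex_RInt_of_continuous; intros; apply continuous_Rabs_fun, HdF).
  rewrite <- (RInt_Chasles (V := R_CompleteNormedModule) _ a c b) by apply Habs.
  rewrite (RInt_ext _ (Derive F) a c), (RInt_ext _ (fun t => opp (Derive F t)) c b).
  2: { intros x Hx; rewrite Rmin_left, Rmax_right in Hx by lra.
       apply Rabs_left1, Hdown; lra. }
  2: { intros x Hx; rewrite Rmin_left, Rmax_right in Hx by lra.
       apply Rabs_pos_eq, Hup; lra. }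
  rewrite (RInt_opp (V := R_CompleteNormedModule))
    by (apply ex_RInt_of_continuous, HdF).
  rewrite !RInt_Derive by auto.
  unfold plus, opp; simpl; ring.
Qed.

Section Bump.

Variables m n : nat.
Hypothesis hn : (1 <= n)%nat.

Lemma Acoef_pos : 0 < Acoef n.
Proof.
  assert (H : 0 < INR n) by (apply lt_0_INR; lia).
  unfold Acoef; apply Rdiv_lt_0_compat; apply pow_lt; lra.
Qed.

Lemma Bcoef_bounds : 0 < Bcoef n < 1.
Proof.
  assert (H : 0 < INR n) by (apply lt_0_INR; lia); unfold Bcoef.
  split; [apply Rdiv_lt_0_compat; lra |].
  apply Rmult_lt_reg_r with (INR n + 1); [lra |].
  unfold Rdiv; rewrite Rmult_assoc, Rinv_l; lra.
Qed.

Lemma Acoef_Bcoef : Acoef n * Bcoef n ^ n * (1 - Bcoef n) = 1.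
Proof.
  assert (H : 0 < INR n) by (apply lt_0_INR; lia); unfold Acoef, Bcoef.
  replace (1 - INR n / (INR n + 1)) with (/ (INR n + 1)) by (field; lra).
  unfold Rdiv; rewrite Rpow_mult_distr, pow_inv, pow_add, pow_1.
  field; split; [lra | split; apply pow_nonzero; lra].
Qed.

Lemma Bcoef_pow_sub : Bcoef n ^ n - Bcoef n ^ (n + 1) = / Acoef n.
Proof.
  assert (HA := Acoef_pos).
  rewrite <- (Rmult_1_l (/ Acoef n)), <- Acoef_Bcoef, pow_add, pow_1; field; lra.
Qed.

Lemma fpoly_eq t : fpoly m n t = Acoef n ^ m * (t ^ (m * n) * (1 - t) ^ m).
Proof. unfold fpoly; rewrite !Rpow_mult_distr, Nat.mul_comm, pow_mult; ring. Qed.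

Lemma fpoly_expand t :
  fpoly m n t = sum_n (fun i => Acoef n ^ m * Binomial.C m i * (-1) ^ i * t ^ (m * n + i)) m.
Proof.
  rewrite fpoly_eq, sum_n_Reals.
  unfold Rminus; rewrite (Rplus_comm 1 (- t)), binomial, <- Rmult_assoc, scal_sum.
  apply sum_eq; intros i _.
  replace (- t) with (-1 * t) by ring; rewrite pow1, pow_add, Rpow_mult_distr; ring.
Qed.

Lemma continuous_Derive_n_fpoly k x : continuous (Derive_n (fpoly m n) k) x.
Proof.
  apply continuous_of_ex_derive.
  change (ex_derive_n (fpoly m n) (S k) x).
  eapply ex_derive_n_ext; [intros t; symmetry; apply fpoly_expand |].
  apply ex_derive_n_sum_monomials.
Qed.

Lemma bump_base_nonneg t : 0 <= t <= 1 -> 0 <= Acoef n * t ^ n * (1 - t).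
Proof.
  intros Ht; assert (HA := Acoef_pos).
  apply Rmult_le_pos; [apply Rmult_le_pos; [lra | apply pow_le] |]; lra.
Qed.

Lemma fpoly_nonneg t : 0 <= t <= 1 -> 0 <= fpoly m n t.
Proof. intros Ht; apply pow_le, bump_base_nonneg, Ht. Qed.

Lemma L1norm_eq :
  L1norm m n = Acoef n ^ m * INR (fact (m * n)) * INR (fact m) / INR (fact (m * n + m + 1)).
Proof.
  unfold L1norm.
  rewrite (RInt_ext _ (fun t => scal (Acoef n ^ m) (t ^ (m * n) * (1 - t) ^ m))).
  - rewrite (RInt_scal (V := R_CompleteNormedModule)), RInt_beta.
    + unfold scal; simpl; unfold mult; simpl; field.
      apply not_0_INR, fact_neq_0.
    + apply ex_RInt_of_continuous; intros.
      apply continuous_of_ex_derive; auto_derive; auto.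
  - intros t Ht; rewrite Rmin_left, Rmax_right in Ht by lra.
    rewrite Rabs_pos_eq by (apply fpoly_nonneg; lra).
    apply fpoly_eq.
Qed.

Lemma L1norm_pos : 0 < L1norm m n.
Proof.
  assert (HA := Acoef_pos); rewrite L1norm_eq.
  apply Rdiv_lt_0_compat; [| apply INR_fact_lt_0].
  apply Rmult_lt_0_compat; [apply Rmult_lt_0_compat; [apply pow_lt, HA |] |];
    apply INR_fact_lt_0.
Qed.

Lemma inv_L1norm :
  / L1norm m n
  = INR (fact (m * n + m + 1)) / (Acoef n ^ m * INR (fact m) * INR (fact (m * n))).
Proof.
  assert (HA := Acoef_pos).
  assert (0 < INR (fact m)) by apply INR_fact_lt_0.
  assert (0 < INR (fact (m * n))) by apply INR_fact_lt_0.
  assert (0 < INR (fact (m * n + m + 1))) by apply INR_fact_lt_0.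
  assert (Acoef n ^ m <> 0) by (apply pow_nonzero; lra).
  rewrite L1norm_eq; field; repeat split; lra.
Qed.

Lemma lambda0_eq delta : lambda0 m n delta = 2 / L1norm m n.
Proof.
  assert (HA := Acoef_pos).
  unfold lambda0; rewrite Bcoef_pow_sub, pow_inv.
  unfold Rdiv at 2; rewrite inv_L1norm.
  assert (0 < INR (fact m)) by apply INR_fact_lt_0.
  assert (0 < INR (fact (m * n))) by apply INR_fact_lt_0.
  assert (Acoef n ^ m <> 0) by (apply pow_nonzero; lra).
  field; repeat split; lra.
Qed.

Hypothesis hm : (1 <= m)%nat.

Lemma fpoly_0 : fpoly m n 0 = 0.
Proof. unfold fpoly; rewrite pow_i, Rmult_0_r, Rmult_0_l by lia; apply pow_i; lia. Qed.

Lemma fpoly_1 : fpoly m n 1 = 0.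
Proof. unfold fpoly; rewrite Rminus_diag, Rmult_0_r; apply pow_i; lia. Qed.

Lemma fpoly_Bcoef : fpoly m n (Bcoef n) = 1.
Proof. unfold fpoly; rewrite Acoef_Bcoef; apply pow1. Qed.

Lemma is_derive_fpoly t :
  is_derive (fpoly m n) t
    (INR m * (INR n + 1) * Acoef n * t ^ pred n * (Acoef n * t ^ n * (1 - t)) ^ pred m
     * (Bcoef n - t)).
Proof.
  assert (H : 0 < INR n) by (apply lt_0_INR; lia).
  unfold fpoly; auto_derive; [auto |].
  unfold Bcoef; destruct n as [| k]; [lia |].
  rewrite <- tech_pow_Rmult; simpl pred; unfold Rminus; field; lra.
Qed.

Lemma RInt_abs_Derive_fpoly : RInt (fun t => Rabs (Derive_n (fpoly m n) 1 t)) 0 1 = 2.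
Proof.
  assert (HB := Bcoef_bounds); assert (HA := Acoef_pos).
  assert (Hpos : forall t, 0 <= t <= 1 -> 0 <= INR m * (INR n + 1) * Acoef n * t ^ pred n
                                              * (Acoef n * t ^ n * (1 - t)) ^ pred m).
  { intros t Ht; assert (0 <= INR m) by apply pos_INR; assert (0 <= INR n) by apply pos_INR.
    assert (0 <= t ^ pred n) by (apply pow_le; lra).
    apply Rmult_le_pos; [| apply pow_le, bump_base_nonneg, Ht].
    apply Rmult_le_pos; [| lra]; apply Rmult_le_pos; [| lra]; apply Rmult_le_pos; lra. }
  change (RInt (fun t => Rabs (Derive (fpoly m n) t)) 0 1 = 2 :> R).
  rewrite (RInt_abs_derive_unimodal (fpoly m n) 0 (Bcoef n) 1), fpoly_0, fpoly_1, fpoly_Bcoef.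
  - ring.
  - lra.
  - intros x; eexists; apply is_derive_fpoly.
  - apply (continuous_Derive_n_fpoly 1).
  - intros x Hx; rewrite (is_derive_unique _ _ _ (is_derive_fpoly x)).
    apply Rmult_le_pos; [apply Hpos |]; lra.
  - intros x Hx; rewrite (is_derive_unique _ _ _ (is_derive_fpoly x)).
    apply Rmult_le_0_l; [apply Hpos |]; lra.
Qed.

End Bump.

Section Weighted.

Variables (m n : nat) (delta : R).
Hypotheses (hn : (1 <= n)%nat) (hd : 0 < delta).

Lemma Ffun_bounds k :
  / L1norm m n * RInt (fun t => Rabs (Derive_n (fpoly m n) k t)) 0 1 <= Ffun k m n delta
  <= (1 + delta) ^ (1 + k) * (/ L1norm m n * RInt (fun t => Rabs (Derive_n (fpoly m n) k t)) 0 1).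
Proof.
  assert (HL := Rinv_0_lt_compat _ (L1norm_pos m n hn)).
  destruct (RInt_weighted_bounds (fun t => (1 + delta * t) ^ (1 + k))
              (fun t => Rabs (Derive_n (fpoly m n) k t)) 0 1 1 ((1 + delta) ^ (1 + k)))
    as [Hlo Hhi].
  - lra.
  - intros; apply continuous_pow_affine.
  - intros; apply continuous_Rabs_fun, continuous_Derive_n_fpoly.
  - intros x Hx; split; [apply Rabs_pos |].
    split; [apply pow_R1_Rle | apply pow_incr]; nra.
  - unfold Ffun; split.
    + apply Rmult_le_compat_l; lra.
    + nra.
Qed.

Lemma Ffun_top_le : Ffun m m n delta <= lambda m n delta.
Proof.
  assert (HL := Rinv_0_lt_compat _ (L1norm_pos m n hn)).
  assert (Hw : RInt (fun t => ((1 + delta * t) ^ (1 + m)) ^ 2) 0 1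
               = ((1 + delta) ^ (2 * m + 3) - 1) / (delta * INR (2 * m + 3))).
  { rewrite (RInt_ext _ (fun t => (1 + delta * t) ^ (2 * m + 2)))
      by (intros; rewrite <- pow_mult; f_equal; lia).
    rewrite RInt_pow_affine_01 by lra.
    replace (S (2 * m + 2)) with (2 * m + 3)%nat by lia; reflexivity. }
  assert (Hw_pos : 0 < ((1 + delta) ^ (2 * m + 3) - 1) / (delta * INR (2 * m + 3))).
  { apply Rdiv_lt_0_compat.
    - assert (1 < (1 + delta) ^ (2 * m + 3)) by (apply Rlt_pow_R1; [lra | lia]); lra.
    - apply Rmult_lt_0_compat; [lra | apply lt_0_INR; lia]. }
  assert (CS := RInt_Cauchy_Schwarz (fun t => (1 + delta * t) ^ (1 + m))
                  (fun t => Rabs (Derive_n (fpoly m n) m t)) 0 1).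
  cbv beta in CS; rewrite Hw in CS.
  unfold Ffun, lambda, L2norm_deriv; rewrite <- inv_L1norm by exact hn.
  rewrite (Rmult_comm (sqrt _) (/ L1norm m n)), Rmult_assoc.
  apply Rmult_le_compat_l; [lra |].
  apply CS; [lra | intros; apply continuous_pow_affine
            | intros; apply continuous_Rabs_fun, continuous_Derive_n_fpoly | exact Hw_pos].
Qed.

End Weighted.

Theorem lemma3 (m n : nat) (delta : R)
  (hm : (2 <= m)%nat) (hn : (1 <= n)%nat)
  (hd0 : 0 < delta) (hd1 : delta <= / 1000000) :
  (1 <= Ffun 0 m n delta <= 1 + delta) /\
  (lambda0 m n delta <= Ffun 1 m n delta <= lambda1 m n delta) /\
  (Ffun m m n delta <= lambda m n delta).
Proof.
  assert (HL := L1norm_pos m n hn).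
  split; [| split].
  - destruct (Ffun_bounds m n delta hn hd0 0) as [Hlo Hhi].
    change (RInt (fun t => Rabs (Derive_n (fpoly m n) 0 t)) 0 1) with (L1norm m n) in Hlo, Hhi.
    rewrite Rinv_l in Hlo, Hhi by lra.
    simpl in Hhi; lra.
  - destruct (Ffun_bounds m n delta hn hd0 1) as [Hlo Hhi].
    rewrite RInt_abs_Derive_fpoly in Hlo, Hhi by lia.
    unfold lambda1; fold (lambda0 m n delta); rewrite lambda0_eq by exact hn.
    unfold Rdiv; rewrite Rmult_comm; split; [exact Hlo | exact Hhi].
  - apply Ffun_top_le; assumption.
Qed.
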